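(* Let $L$ be a finite-dimensional solvable Lie algebra over an arbitrary field $F$ and let $U$ be a proper subalgebra of $L$. Then the following are equivalent: (i) $U$ is modular in $L$; (ii) $U$ is semi-modular in $L$; (iii) $U$ is a quasi-ideal of $L$.
   Context: For subalgebras $U,B$ of a Lie algebra $L$, $\langle U,B\rangle$ denotes the subalgebra generated by $U\cup B$. A subalgebra $B$ covers a subalgebra $A$ if $A$ is a maximal subalgebra of $B$. A subalgebra $U$ of $L$ is modular in $L$ if $\langle U,B\rangle\cap C=\langle B,U\cap C\rangle$ for all subalgebras $B\subseteq C$ of $L$, and $\langle U,B\rangle\cap C=\langle B\cap C,U\rangle$ for all subalgebras $B,C$ of $L$ with $U\subseteq C$. $U$ is upper modular (um) in $L$ if whenever $B$ is a subalgebra of $L$ which covers $U\cap B$, then $\langle U,B\rangle$ covers $U$; $U$ is lower modular (lm) in $L$ if whenever $B$ is a subalgebra of $L$ such that $\langle U,B\rangle$ covers $U$, then $B$ covers $U\cap B$; $U$ is semi-modular (sm) in $L$ if it is both um and lm in $L$. A subalgebra $Q$ of $L$ is a quasi-ideal of $L$ if $[Q,V]\subseteq Q+V$ for every subspace $V$ of $L$. *)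

From HB Require Import structures.
From mathcomp Require Import all_boot all_order all_algebra.
Set Implicit Arguments. Unset Strict Implicit. Unset Printing Implicit Defensive.
Import GRing.Theory.
Local Open Scope ring_scope.


Section Lie.
Variables (F : fieldType) (L : vectType F) (br : L -> L -> L).

Definition is_lie_bracket : Prop :=
  [/\ forall (a : F) (x y z : L), br (a *: x + y) z = a *: br x z + br y z,
      forall (a : F) (x y z : L), br z (a *: x + y) = a *: br z x + br z y,
      forall x : L, br x x = 0
    & forall x y z : L, br x (br y z) + br y (br z x) + br z (br x y) = 0].

(* [A, B] : the subspace spanned by all brackets [a, b], a in A, b in B
   (spanned by the brackets of basis vectors, by bilinearity). *)
Definition lie_prod (A B : {vspace L}) : {vspace L} :=
  <<[seq br x y | x <- vbasis A, y <- vbasis B]>>%VS.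

Definition is_subalg (A : {vspace L}) : Prop :=
  forall x y, x \in A -> y \in A -> br x y \in A.

Fixpoint derived (n : nat) : {vspace L} :=
  if n is m.+1 then lie_prod (derived m) (derived m) else fullv%VS.

Definition lie_solvable : Prop := exists n, derived n = 0%VS.

(* Subalgebra generated by a subspace S: iterate S |-> S + [S, S];
   this stabilises after at most dim L steps at the smallest subalgebra
   containing S. *)
Definition gen_step (S : {vspace L}) : {vspace L} := (S + lie_prod S S)%VS.
Definition gen_subalg (S : {vspace L}) : {vspace L} :=
  iter (\dim (fullv%VS : {vspace L})) gen_step S.

Definition gen2 (U B : {vspace L}) : {vspace L} := gen_subalg (U + B)%VS.

(* A is a maximal subalgebra of B (equivalently, B covers A). *)
Definition covers (B A : {vspace L}) : Prop :=
  [/\ is_subalg B, is_subalg A, (A <= B)%VS, A != B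
    & forall C : {vspace L}, is_subalg C -> (A <= C)%VS -> (C <= B)%VS ->
        C = A \/ C = B].

Definition modular (U : {vspace L}) : Prop :=
  (forall B C : {vspace L}, is_subalg B -> is_subalg C -> (B <= C)%VS ->
     (gen2 U B :&: C)%VS = gen2 B (U :&: C)%VS) /\
  (forall B C : {vspace L}, is_subalg B -> is_subalg C -> (U <= C)%VS ->
     (gen2 U B :&: C)%VS = gen2 (B :&: C)%VS U).

Definition upper_modular (U : {vspace L}) : Prop :=
  forall B : {vspace L}, is_subalg B -> covers B (U :&: B)%VS ->
    covers (gen2 U B) U.

Definition lower_modular (U : {vspace L}) : Prop :=
  forall B : {vspace L}, is_subalg B -> covers (gen2 U B) U ->
    covers B (U :&: B)%VS.

Definition semi_modular (U : {vspace L}) : Prop :=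
  upper_modular U /\ lower_modular U.

Definition quasi_ideal (Q : {vspace L}) : Prop :=
  is_subalg Q /\ forall V : {vspace L}, (lie_prod Q V <= Q + V)%VS.

End Lie.

(* We prove the cycle (i) => (ii) => (iii) => (i).
   - Modular => semi-modular is lattice theory: the two modular laws carry
     the interval [U :&: B, B] onto [U, <U,B>] and back, so maximality is
     transported in both directions.
   - Quasi-ideal => modular: if Q is a quasi-ideal and B a subalgebra, then
     Q + B is already a subalgebra, so <Q,B> = Q + B and both modular laws
     reduce to Dedekind's modular law for subspaces.
   - Semi-modular => quasi-ideal uses solvability.  For x \notin U, upper
     modularity says that M = <U,x> covers U.  Let D be the first term of the
     derived series of M not contained in U.  D is an ideal of M, so
     U + D = M = <U,D>, and lower modularity says that D covers U :&: D.
     Since [D,D] <= U :&: D, every subspace between U :&: D and D is a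
     subalgebra, so U :&: D has codimension one in D, hence U has codimension
     one in M.  Therefore M = U + Fx, i.e. [U,x] <= U + Fx for every x.
   The argument does not use that U is proper. *)

From HB Require Import structures.
From mathcomp Require Import all_boot all_order all_algebra.
Set Implicit Arguments. Unset Strict Implicit. Unset Printing Implicit Defensive.
Import GRing.Theory.
Local Open Scope ring_scope.

Section LinearAlgebra.
Variables (F : fieldType) (L : vectType F).

Definition lin_comb_hom (f : L -> L) : Prop :=
  forall a x y, f (a *: x + y) = a *: f x + f y.

Lemma lin_comb_hom0 f : lin_comb_hom f -> f 0 = 0.
Proof.
move=> Hf; have := Hf 1 0 0; rewrite scaler0 add0r scale1r => H.
by apply: (@addrI _ (f 0)); rewrite addr0 -H.
Qed.

Lemma lin_comb_hom_span f (P : {vspace L}) (X : seq L) d :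
  lin_comb_hom f -> {in X, forall x, f x \in P} -> d \in <<X>>%VS -> f d \in P.
Proof.
move=> Hf HX Hd; rewrite (coord_span (X := in_tuple X) Hd).
elim/big_rec: _ => [|i v _ Hv]; first by rewrite (lin_comb_hom0 Hf) mem0v.
by rewrite Hf memvD // memvZ // HX // mem_nth // size_tuple.
Qed.

Lemma modular_law (A B C : {vspace L}) :
  (A <= C)%VS -> ((A + B) :&: C = A + (B :&: C))%VS.
Proof.
move=> HAC; apply/subv_anti/andP; split; last first.
  by rewrite subv_cap (addvS (subvv A) (capvSl B C)) subv_add HAC capvSr.
apply/subvP => _ /[!memv_cap] /andP[/memv_addP[a Ha [b Hb ->]] HabC].
have HbC : b \in C by rewrite -(addKr a b) memvD // memvN (subvP HAC).
by rewrite memv_add // memv_cap Hb.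
Qed.

Lemma cap_line0 (A : {vspace L}) y : y \notin A -> (A :&: <[y]> = 0)%VS.
Proof.
move=> Hy; have Hy0 : y != 0 by apply: contraNneq Hy => ->; rewrite mem0v.
apply/eqP; rewrite -dimv_eq0 eqn0Ngt; apply: contra Hy => Hdim.
have E : (A :&: <[y]> == <[y]>)%VS.
  by rewrite eqEdim capvSr dim_vline Hy0.
by rewrite memvE -(eqP E) capvSl.
Qed.

Lemma dim_add_line (A : {vspace L}) y :
  y \notin A -> \dim (A + <[y]>) = (\dim A).+1.
Proof.
move=> Hy; have Hy0 : y != 0 by apply: contraNneq Hy => ->; rewrite mem0v.
by have := dimv_sum_cap A <[y]>; rewrite cap_line0 // dimv0 addn0 dim_vline Hy0 addn1.
Qed.

End LinearAlgebra.

Lemma pred_switch (P : nat -> bool) n :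
  ~~ P 0 -> P n -> exists i, ~~ P i /\ P i.+1.
Proof.
elim: n => [|n IH] HP0 HPn; first by rewrite HPn in HP0.
by case E: (P n); [apply: IH | exists n; rewrite E].
Qed.

Section LieAlgebra.
Variables (F : fieldType) (L : vectType F) (br : L -> L -> L).
Hypothesis Hlie : is_lie_bracket br.

Lemma br_lin_l z : lin_comb_hom (br^~ z).
Proof. by case: Hlie => H _ _ _ a x y; rewrite H. Qed.

Lemma br_lin_r z : lin_comb_hom (br z).
Proof. by case: Hlie => _ H _ _ a x y; rewrite H. Qed.

Lemma brDl x y z : br (x + y) z = br x z + br y z.
Proof. by have := br_lin_l z 1 x y; rewrite !scale1r. Qed.

Lemma brDr x y z : br z (x + y) = br z x + br z y.
Proof. by have := br_lin_r z 1 x y; rewrite !scale1r. Qed.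

Lemma br0l y : br 0 y = 0.
Proof. exact: lin_comb_hom0 (br_lin_l y). Qed.

Lemma brZl a x z : br (a *: x) z = a *: br x z.
Proof. by have := br_lin_l z a x 0; rewrite addr0 br0l addr0. Qed.

Lemma brC x y : br y x = - br x y.
Proof.
case: Hlie => _ _ Hxx _; have := Hxx (x + y).
rewrite brDl !brDr !Hxx add0r addr0 => /eqP; rewrite addr_eq0 => /eqP ->.
by rewrite opprK.
Qed.

Lemma br_jacobi x y z : br x (br y z) = - br y (br z x) - br z (br x y).
Proof.
case: Hlie => _ _ _ J; apply/eqP; rewrite -subr_eq0 opprB opprK.
by rewrite [br z _ + _]addrC addrA J.
Qed.

Lemma mem_lie_prod (A B : {vspace L}) x y :
  x \in A -> y \in B -> br x y \in lie_prod br A B.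
Proof.
rewrite -{1}(span_basis (vbasisP A)) -{1}(span_basis (vbasisP B)) => Hx Hy.
apply: (lin_comb_hom_span (br_lin_l y)) Hx => a Ha.
apply: (lin_comb_hom_span (br_lin_r a)) Hy => b Hb.
by apply: memv_span; apply/allpairsP; exists (a, b).
Qed.

Lemma lie_prodP (A B P : {vspace L}) :
  (forall x y, x \in A -> y \in B -> br x y \in P) -> (lie_prod br A B <= P)%VS.
Proof.
move=> H; apply/span_subvP => _ /allpairsP[[a b] /= [Ha Hb ->]].
by apply: H; apply: vbasis_mem.
Qed.

Lemma lie_prodS (A B A' B' : {vspace L}) :
  (A <= A')%VS -> (B <= B')%VS -> (lie_prod br A B <= lie_prod br A' B')%VS.
Proof.
move=> /subvP HA /subvP HB; apply: lie_prodP => x y Hx Hy.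
by apply: mem_lie_prod; [apply: HA | apply: HB].
Qed.

Lemma subalgP (A : {vspace L}) : is_subalg br A <-> (lie_prod br A A <= A)%VS.
Proof.
split=> [|/subvP H x y Hx Hy]; first exact: lie_prodP.
by apply: H; apply: mem_lie_prod.
Qed.

Lemma subalg0 : is_subalg br 0%VS.
Proof. by move=> x y; rewrite memv0 => /eqP-> _; rewrite br0l mem0v. Qed.

Lemma subalg_line x : is_subalg br <[x]>%VS.
Proof.
move=> _ _ /vlineP[a ->] /vlineP[b ->].
case: Hlie => _ _ Hxx _.
by rewrite brZl brC brZl Hxx scaler0 oppr0 scaler0 mem0v.
Qed.

Lemma subalg_cap (A B : {vspace L}) :
  is_subalg br A -> is_subalg br B -> is_subalg br (A :&: B)%VS.
Proof.
move=> HA HB x y; rewrite !memv_cap => /andP[Hx1 Hx2] /andP[Hy1 Hy2].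
by rewrite HA ?HB.
Qed.

Lemma subalg_add (A B : {vspace L}) :
  is_subalg br A -> is_subalg br B ->
  (forall a b, a \in A -> b \in B -> br a b \in (A + B)%VS) ->
  is_subalg br (A + B)%VS.
Proof.
move=> HA HB Hmix x y /memv_addP[a Ha [b Hb ->]] /memv_addP[a' Ha' [b' Hb' ->]].
rewrite !brDl !brDr; apply: memvD; apply: memvD.
- exact: subvP (addvSl A B) _ (HA _ _ Ha Ha').
- exact: Hmix.
- by rewrite brC memvN Hmix.
- exact: subvP (addvSr A B) _ (HB _ _ Hb Hb').
Qed.

(* gen_subalg S is the smallest subalgebra containing S. The iteration of
   gen_step either gains a dimension at each step or has become stationary,
   so dim L steps suffice to reach a fixed point. *)
Lemma gen_step_ge (S : {vspace L}) : (S <= gen_step br S)%VS.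
Proof. exact: addvSl. Qed.

Lemma gen_step_progress (S : {vspace L}) k :
  (k <= \dim (iter k (gen_step br) S))%N ||
  (gen_step br (iter k (gen_step br) S) == iter k (gen_step br) S).
Proof.
elim: k => [|k IH] //=; set G := iter k _ S in IH *.
have [HG|HG] := eqVneq (gen_step br G) G; first by rewrite !HG eqxx orbT.
move: IH; rewrite (negPf HG) orbF => IH.
have := dimv_leqif_eq (gen_step_ge G).
by move/ltn_leqif; rewrite eq_sym HG => /(leq_ltn_trans IH) ->.
Qed.

Lemma gen_subalgP (S : {vspace L}) : is_subalg br (gen_subalg br S).
Proof.
apply/subalgP; apply/addv_idPl; rewrite /gen_subalg -/(gen_step br _).
set n := \dim _; case/orP: (gen_step_progress S n) => [Hn|/eqP //].
have -> : iter n (gen_step br) S = fullv by apply/eqP; rewrite eqEdim subvf Hn.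
by apply/subv_anti; rewrite subvf gen_step_ge.
Qed.

Lemma gen_ge (S : {vspace L}) : (S <= gen_subalg br S)%VS.
Proof.
rewrite /gen_subalg; elim: (\dim _) => [|k IH] /=; first exact: subvv.
exact: subv_trans IH (gen_step_ge _).
Qed.

Lemma gen_min (S T : {vspace L}) :
  is_subalg br T -> (S <= T)%VS -> (gen_subalg br S <= T)%VS.
Proof.
move=> /subalgP HT HS; rewrite /gen_subalg; elim: (\dim _) => [|k IH] //=.
by rewrite /gen_step subv_add IH (subv_trans (lie_prodS IH IH) HT).
Qed.

Lemma gen_id (S : {vspace L}) : is_subalg br S -> gen_subalg br S = S.
Proof. by move=> HS; apply/subv_anti; rewrite gen_ge gen_min ?subvv. Qed.

Lemma gen2_subalg (U B : {vspace L}) : is_subalg br (gen2 br U B).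
Proof. exact: gen_subalgP. Qed.

Lemma gen2_geU (U B : {vspace L}) : (U <= gen2 br U B)%VS.
Proof. exact: subv_trans (addvSl U B) (gen_ge _). Qed.

Lemma gen2_geB (U B : {vspace L}) : (B <= gen2 br U B)%VS.
Proof. exact: subv_trans (addvSr U B) (gen_ge _). Qed.

Lemma gen2_min (U B T : {vspace L}) :
  is_subalg br T -> (U <= T)%VS -> (B <= T)%VS -> (gen2 br U B <= T)%VS.
Proof. by move=> HT HU HB; apply: gen_min; rewrite // subv_add HU HB. Qed.

Lemma gen2_add (U B : {vspace L}) :
  is_subalg br (U + B)%VS -> gen2 br U B = (U + B)%VS.
Proof. exact: gen_id. Qed.

(* (i) => (ii), upper half: the second modular law identifies the subalgebras
   between U and <U,B> with those between U :&: B and B. *)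
Lemma modular_upper (U : {vspace L}) :
  is_subalg br U -> modular br U -> upper_modular br U.
Proof.
move=> HU [_ M2] B HB [_ _ HUB HneB Hmax]; split=> //.
- exact: gen2_subalg.
- exact: gen2_geU.
- apply: contraNneq HneB => E; apply/eqP/capv_idPr.
  by rewrite E gen2_geB.
move=> C HC HUC HCG; have := M2 B C HB HC HUC.
rewrite (capv_idPr HCG) => ->.
have HUBC : (U :&: B <= B :&: C)%VS.
  by rewrite subv_cap capvSr (subv_trans (capvSl U B) HUC).
have [->|->] := Hmax (B :&: C)%VS (subalg_cap HB HC) HUBC (capvSl B C).
  by left; rewrite /gen2 (addv_idPr (capvSl U B)) gen_id.
by right; rewrite /gen2 addvC.
Qed.

(* (i) => (ii), lower half: by the first modular law every subalgebra C between
   U :&: B and B is recovered as <U,C> :&: B from a subalgebra over U. *)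
Lemma modular_lower (U : {vspace L}) :
  is_subalg br U -> modular br U -> lower_modular br U.
Proof.
move=> HU [M1 _] B HB [_ _ _ HneG Hmax]; split=> //.
- exact: subalg_cap.
- exact: capvSr.
- apply: contraNneq HneG => /capv_idPr HBU.
  by rewrite /gen2 (addv_idPl HBU) gen_id.
move=> C HC HUC HCB; have := M1 C B HC HB HCB.
rewrite /gen2 (addv_idPl HUC) (gen_id HC) -/(gen2 br U C) => <-.
have HG2 : (gen2 br U C <= gen2 br U B)%VS.
  apply: gen2_min; [exact: gen2_subalg | exact: gen2_geU |].
  exact: subv_trans HCB (gen2_geB _ _).
have [->|->] := Hmax _ (@gen2_subalg U C) (gen2_geU _ _) HG2; first by left.
by right; rewrite (capv_idPr (gen2_geB _ _)).
Qed.

Lemma quasi_ideal_add (Q B : {vspace L}) :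
  quasi_ideal br Q -> is_subalg br B -> is_subalg br (Q + B)%VS.
Proof.
move=> [HQ HQV] HB; apply: subalg_add => // a b Ha Hb.
exact: subvP (HQV B) _ (mem_lie_prod Ha Hb).
Qed.

Lemma quasi_ideal_modular (Q : {vspace L}) :
  quasi_ideal br Q -> modular br Q.
Proof.
move=> HQ; have [HQs HQV] := HQ.
have genQ B : is_subalg br B -> gen2 br Q B = (Q + B)%VS.
  by move=> HB; apply: gen2_add; apply: quasi_ideal_add.
split=> B C HB HC HC'; rewrite genQ //.
- have HBQC : is_subalg br (B + Q :&: C)%VS.
    apply: subalg_add => //; first exact: subalg_cap.
    move=> b q Hb /[!memv_cap] /andP[Hq HqC].
    rewrite brC memvN -modular_law // addvC memv_cap.
    by rewrite (subvP (HQV B)) ?mem_lie_prod // HC // (subvP HC').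
  by rewrite gen2_add // addvC modular_law.
- have HBCQ : is_subalg br (B :&: C + Q)%VS.
    by rewrite addvC; apply: quasi_ideal_add; last exact: subalg_cap.
  by rewrite gen2_add // modular_law // addvC.
Qed.

Definition derived_of (M : {vspace L}) (i : nat) : {vspace L} :=
  iter i (fun S => lie_prod br S S) M.

Lemma derived_of_ideal (M : {vspace L}) i : is_subalg br M ->
  (derived_of M i <= M)%VS /\
  (forall m d, m \in M -> d \in derived_of M i -> br m d \in derived_of M i).
Proof.
move=> HM; elim: i => [|i [IHsub IHid]]; first by split; [exact: subvv | exact: HM].
have Hdec : (derived_of M i.+1 <= derived_of M i)%VS.
  by apply: lie_prodP => a b Ha Hb; apply: IHid => //; apply: (subvP IHsub).
split=> [|m d Hm Hd]; first exact: subv_trans Hdec IHsub.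
apply: (lin_comb_hom_span (br_lin_r m)) Hd => _ /allpairsP[[a b] /= [Ha Hb ->]].
have {}Ha : a \in derived_of M i := vbasis_mem Ha.
have {}Hb : b \in derived_of M i := vbasis_mem Hb.
rewrite br_jacobi memvD // memvN mem_lie_prod //.
- by rewrite brC memvN IHid.
- exact: IHid.
Qed.

Lemma derived_of_sub (M : {vspace L}) i : (derived_of M i <= derived br i)%VS.
Proof. by elim: i => [|i IH] /=; [exact: subvf | exact: lie_prodS]. Qed.

(* A subalgebra D covering a subspace A containing [D, D] covers it with
   codimension one: every A + Fy with y in D is a subalgebra. *)
Lemma covers_codim1 (D A : {vspace L}) :
  (lie_prod br D D <= A)%VS -> covers br D A -> \dim D = (\dim A).+1.
Proof.
move=> HDA [_ _ HAD HneD Hmax].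
have /subvPn[y HyD HyA] : ~~ (D <= A)%VS.
  by apply: contra HneD => HDA'; apply/eqP/subv_anti; rewrite HAD HDA'.
have HCD : (A + <[y]> <= D)%VS by rewrite subv_add HAD -memvE.
have HC : is_subalg br (A + <[y]>)%VS.
  move=> a b Ha Hb; apply: subvP (addvSl A _) _ _; apply: subvP HDA _ _.
  by apply: mem_lie_prod; apply: (subvP HCD).
have [E|<-] := Hmax _ HC (addvSl _ _) HCD; last exact: dim_add_line.
by move: HyA; rewrite -E memvE addvSr.
Qed.

Lemma lower_modular_cover_codim1 (U M : {vspace L}) :
  lie_solvable br -> is_subalg br U -> lower_modular br U ->
  covers br M U -> \dim M = (\dim U).+1.
Proof.
move=> [n Hn] HU Hlm HcovM; have [HM _ HUM HneM Hmax] := HcovM.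
have P0 : ~~ (derived_of M 0 <= U)%VS.
  by apply: contra HneM => HMU; apply/eqP/subv_anti; rewrite HUM HMU.
have Pn : (derived_of M n <= U)%VS.
  by rewrite (subv_trans (derived_of_sub M n)) // Hn sub0v.
have [i [HDU HD'U]] := pred_switch (P := fun i => (derived_of M i <= U)%VS) P0 Pn.
set D := derived_of M i in HDU HD'U.
have [HDM HDid] := derived_of_ideal i HM; rewrite -/D in HDM HDid.
have HD : is_subalg br D by move=> a b Ha Hb; rewrite HDid // (subvP HDM).
have HUD : is_subalg br (U + D)%VS.
  apply: subalg_add => // a b Ha Hb.
  by rewrite (subvP (addvSr U D)) // HDid // (subvP HUM).
have UDM : (U + D)%VS = M.
  have HUDM : (U + D <= M)%VS by rewrite subv_add HUM HDM.
  have [E|//] := Hmax _ HUD (addvSl U D) HUDM.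
  by move: HDU; rewrite -E addvSr.
have HcovD : covers br D (U :&: D) by apply: Hlm; rewrite // gen2_add UDM.
have HD'UD : (lie_prod br D D <= U :&: D)%VS.
  by rewrite subv_cap HD'U; apply/subalgP.
have := dimv_sum_cap U D; rewrite UDM (covers_codim1 HD'UD HcovD) addnS.
by rewrite -addSn => /addIn.
Qed.

Lemma covers_line0 x : x != 0 -> covers br <[x]> 0.
Proof.
move=> Hx0; split; [exact: subalg_line | exact: subalg0 | exact: sub0v | |].
  by rewrite eq_sym -dimv_eq0 dim_vline Hx0.
move=> C _ _ HCx; have := dimvS HCx; rewrite dim_vline Hx0 leq_eqVlt ltnS leqn0.
case/orP=> [Hdim|]; last by rewrite dimv_eq0 => /eqP->; left.
by right; apply/eqP; rewrite eqEdim HCx dim_vline Hx0 (eqP Hdim).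
Qed.

Lemma semi_modular_add_line (U : {vspace L}) x :
  lie_solvable br -> is_subalg br U -> semi_modular br U ->
  x \notin U -> is_subalg br (U + <[x]>)%VS.
Proof.
move=> Hsolv HU [Hum Hlm] HxU.
have Hx0 : x != 0 by apply: contraNneq HxU => ->; rewrite mem0v.
have HcovM : covers br (gen2 br U <[x]>) U.
  apply: Hum; first exact: subalg_line.
  by rewrite cap_line0 //; apply: covers_line0.
have HdimM := lower_modular_cover_codim1 Hsolv HU Hlm HcovM.
have HUxM : (U + <[x]> <= gen2 br U <[x]>)%VS by apply: gen_ge.
have -> : (U + <[x]>)%VS = gen2 br U <[x]>.
  by apply/eqP; rewrite eqEdim HUxM HdimM (dim_add_line HxU) ltnSn.
exact: gen2_subalg.
Qed.

Lemma semi_modular_quasi_ideal (U : {vspace L}) :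
  lie_solvable br -> is_subalg br U -> semi_modular br U -> quasi_ideal br U.
Proof.
move=> Hsolv HU Hsm; split=> // V; apply: lie_prodP => u v Hu Hv.
have [HvU|HvU] := boolP (v \in U).
  by rewrite (subvP (addvSl U V)) // HU.
have HUvV : (U + <[v]> <= U + V)%VS by rewrite addvS // -memvE.
rewrite (subvP HUvV) // (semi_modular_add_line Hsolv HU Hsm HvU) //.
  by rewrite (subvP (addvSl _ _)).
by rewrite (subvP (addvSr _ _)) // memv_line.
Qed.

End LieAlgebra.

Theorem theorem2p3 (F : fieldType) (L : vectType F) (br : L -> L -> L)
  (Hlie : is_lie_bracket br) (Hsolv : lie_solvable br)
  (U : {vspace L}) (HU : is_subalg br U) (Hproper : U != fullv%VS) :
  [<-> modular br U; semi_modular br U; quasi_ideal br U].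
Proof.
tfae.
- by move=> Hmod; split; [exact: modular_upper | exact: modular_lower].
- exact: semi_modular_quasi_ideal.
- exact: quasi_ideal_modular.
Qed.
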